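(* If $S$ is a nilpotent right loop, then its group torsion $G_S$ is a solvable group.
   Context: A right loop is a set $S$ with binary operation $\circ$ and two-sided identity $1$ such that each equation $X\circ a=b$ has a unique solution. For $y,z\in S$, $f^S(y,z):S\to S$ sends $x$ to the unique $X$ with $X\circ(y\circ z)=(x\circ y)\circ z$; the group torsion $G_S\le\mathrm{Sym}(S)$ is generated by all $f^S(y,z)$. A congruence is an equivalence relation which is a right subloop of $S\times S$; an invariant right subloop is the class $T$ of $1$ under a congruence, $S/T=\{T\circ x\}$ with $(T\circ x)\circ(T\circ y)=T\circ(x\circ y)$. For congruences $\beta,\gamma$, $\gamma$ centralizes $\beta$ if there is a congruence $(\gamma|\beta)$ on the right loop $\beta\subseteq S\times S$ with: (i) $(x,y)(\gamma|\beta)(u,v)\Rightarrow x\gamma u$; (ii) for $(x,y)\in\beta$, $(u,v)\mapsto u$ is a bijection from the $(\gamma|\beta)$-class of $(x,y)$ to the $\gamma$-class of $x$; (iii) $(x,y)\in\gamma\Rightarrow(x,x)(\gamma|\beta)(y,y)$; (iv) $(x,y)(\gamma|\beta)(u,v)\Rightarrow(y,x)(\gamma|\beta)(v,u)$; (v) $(x,y)(\gamma|\beta)(u,v)$, $(y,z)(\gamma|\beta)(v,w)\Rightarrow(x,z)(\gamma|\beta)(u,w)$. The center $\mathcal Z(S)$ is the class of $1$ under the unique maximal congruence centralized by $S\times S$. $S$ is nilpotent if the series $\mathcal Z_0=\{1\}$, $\mathcal Z_1=\mathcal Z(S)$, $\mathcal Z_{i+1}/\mathcal Z_i=\mathcal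 Z(S/\mathcal Z_i)$ reaches $\mathcal Z_n=S$ for some $n$. *)

(* Right loops may be infinite, so everything is stated for an
   arbitrary carrier type, with subgroups of Sym(S) represented as predicates
   on functions S -> S. *)
From Stdlib Require Import IndefiniteDescription.

Set Implicit Arguments.

Record magma := Magma {
  carrier :> Type;
  mop : carrier -> carrier -> carrier;
  munit : carrier
}.
Arguments mop {m} _ _.
Arguments munit {m}.

Definition is_right_loop (M : magma) : Prop :=
  (forall x : M, mop munit x = x /\ mop x munit = x) /\
  (forall a b : M, exists! X : M, mop X a = b).

Definition prodM (M N : magma) : magma :=
  {| carrier := (M * N)%type;
     mop := fun p q => (mop (fst p) (fst q), mop (snd p) (snd q));
     munit := (munit, munit) |}.

(* C is a congruence of the right subloop P of M: an equivalence relation on P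
   which (as a subset of P x P inside M x M) contains (1,1) and is closed under
   the operation and under right division (solutions of X o a = b). *)
Definition congruence_on (M : magma) (P : M -> Prop) (C : M -> M -> Prop) : Prop :=
  (forall x y, C x y -> P x /\ P y) /\
  (forall x, P x -> C x x) /\
  (forall x y, C x y -> C y x) /\
  (forall x y z, C x y -> C y z -> C x z) /\
  C munit munit /\
  (forall a a' b b', C a a' -> C b b' -> C (mop a b) (mop a' b')) /\
  (forall a a' b b' X X', C a a' -> C b b' ->
       mop X a = b -> mop X' a' = b' -> C X X').

Definition congruence (M : magma) (C : M -> M -> Prop) : Prop :=
  @congruence_on M (fun _ => True) C.

(* gamma centralizes beta (conditions (i)-(v)); (gamma|beta) is a congruence
   on the right loop beta, a right subloop of S x S. *)
Definition centralizes (M : magma) (gamma beta : M -> M -> Prop) : Prop :=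
  exists D : prodM M M -> prodM M M -> Prop,
    @congruence_on (prodM M M) (fun p => beta (fst p) (snd p)) D /\
    (forall x y u v, D (x, y) (u, v) -> gamma x u) /\
    (* (ii) (u,v) |-> u is a bijection from the D-class of (x,y) onto the
       gamma-class of x (well-definedness is (i)) *)
    (forall x y, beta x y ->
       (forall p q, D (x, y) p -> D (x, y) q -> fst p = fst q -> p = q) /\
       (forall u, gamma x u -> exists v, D (x, y) (u, v))) /\
    (forall x y, gamma x y -> D (x, x) (y, y)) /\
    (forall x y u v, D (x, y) (u, v) -> D (y, x) (v, u)) /\
    (forall x y z u v w, D (x, y) (u, v) -> D (y, z) (v, w) -> D (x, z) (u, w)).

Definition is_center_congruence (M : magma) (zeta : M -> M -> Prop) : Prop :=
  @congruence M zeta /\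
  @centralizes M (fun _ _ => True) zeta /\
  (forall beta : M -> M -> Prop, @congruence M beta ->
     @centralizes M (fun _ _ => True) beta ->
     forall x y, beta x y -> zeta x y).

Definition qcarrier (M : magma) (C : M -> M -> Prop) : Type :=
  { P : M -> Prop | exists x, P = C x }.

Definition qcls (M : magma) (C : M -> M -> Prop) (x : M) : @qcarrier M C :=
  exist (fun P => exists x, P = C x) (C x) (ex_intro _ x eq_refl).

Definition qrep (M : magma) (C : M -> M -> Prop) (p : @qcarrier M C) : M :=
  proj1_sig (constructive_indefinite_description _ (proj2_sig p)).

Definition quotM (M : magma) (C : M -> M -> Prop) : magma :=
  {| carrier := @qcarrier M C;
     mop := fun p q => @qcls M C (mop (@qrep M C p) (@qrep M C q));
     munit := @qcls M C munit |}.

(* Nilpotency, via the congruences alpha i whose classes of 1 are Z_i: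
   alpha 0 is equality (Z_0 = {1}); Z_{i+1}/Z_i = Z(S/Z_i), i.e. alpha (i+1)
   is the preimage of the center congruence of S/alpha i; and Z_n = S. *)
Definition nilpotent (M : magma) : Prop :=
  exists (n : nat) (alpha : nat -> M -> M -> Prop)
         (zeta : forall i, @quotM M (alpha i) -> @quotM M (alpha i) -> Prop),
    (forall x y, alpha 0 x y <-> x = y) /\
    (forall i, i < n ->
       @is_center_congruence (@quotM M (alpha i)) (zeta i) /\
       (forall x y, alpha (S i) x y <-> zeta i (@qcls M (alpha i) x) (@qcls M (alpha i) y))) /\
    (forall x y, alpha n x y).

Inductive gen_perm (T : Type) (A : (T -> T) -> Prop) : (T -> T) -> Prop :=
  | gen_in : forall f, A f -> gen_perm A f
  | gen_id : gen_perm A (fun x => x)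
  | gen_comp : forall f g, gen_perm A f -> gen_perm A g ->
               gen_perm A (fun x => f (g x))
  | gen_inv : forall f g, gen_perm A f ->
               (forall x, g (f x) = x) -> (forall x, f (g x) = x) ->
               gen_perm A g.

Definition commutator_subgroup (T : Type) (H : (T -> T) -> Prop) : (T -> T) -> Prop :=
  gen_perm (fun c => exists g h g' h', H g /\ H h /\
      (forall x, g' (g x) = x) /\ (forall x, g (g' x) = x) /\
      (forall x, h' (h x) = x) /\ (forall x, h (h' x) = x) /\
      c = (fun x => g' (h' (g (h x))))).

Fixpoint derived (T : Type) (G : (T -> T) -> Prop) (k : nat) : (T -> T) -> Prop :=
  match k with
  | 0 => G
  | S k => commutator_subgroup (derived G k)
  end.

Definition solvable_perm_group (T : Type) (G : (T -> T) -> Prop) : Prop :=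
  exists n, forall g, derived G n g -> forall x, g x = x.

Definition is_torsion_map (M : magma) (y z : M) (f : M -> M) : Prop :=
  forall x, mop (f x) (mop y z) = mop (mop x y) z.

Definition group_torsion (M : magma) : (M -> M) -> Prop :=
  gen_perm (fun f => exists y z : M, @is_torsion_map M y z f).

From Stdlib Require Import IndefiniteDescription FunctionalExtensionality
  PropExtensionality ProofIrrelevance Arith Lia.

(* Let alpha 0 (equality), alpha 1, ..., alpha n (total) be the congruences of
   the upper central series of S.  We prove that every element of the k-th
   derived subgroup of G_S moves each x only inside its alpha (n-k)-class; for
   k = n this says that the n-th derived subgroup is trivial.

   The inductive step takes place in a quotient Q = S/C, C = alpha i, whose
   centre congruence zeta is witnessed by a relation D on Q x Q as in the
   definition of centralizing.
   - From D alone: central elements of Q commute and associate with every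
     element, and any two "admissible" self-maps of Q (fixing 1 and the
     centre, preserving D, moving points within zeta-classes) commute.
   - Every element of G_S is "compatible" with C, zeta and D, because a
     torsion map f(y,z) is right multiplication by y and z followed by right
     division by yz; so it induces a map on Q, admissible when the element
     moves points within alpha (i+1) = preimage of zeta.
   Hence for such g, h in G_S the maps gh and hg agree modulo C, i.e. their
   commutator moves points within C. *)

Lemma prodM_mop (M N : magma) (a c : M) (b d : N) :
  @mop (prodM M N) (a, b) (c, d) = (mop a c, mop b d).
Proof. reflexivity. Qed.

(* A relation compatible with the operation and right division is preserved
   and reflected by maps of the shape x |-> ((x y) z) / (y z); this is the
   reason why torsion maps respect congruences. *)
Lemma congruence_on_torsion_transfer {N : magma} {P : N -> Prop}
    {E : N -> N -> Prop} {y z a b a' b' : N} :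
  congruence_on N P E -> P y -> P z -> P (mop y z) ->
  mop a' (mop y z) = mop (mop a y) z -> mop b' (mop y z) = mop (mop b y) z ->
  (E a b <-> E a' b').
Proof.
  intros (_ & Erefl & _ & _ & _ & Eop & Ediv) Py Pz Pyz Ha Hb.
  split; intro Hab.
  - apply (Ediv (mop y z) (mop y z) (mop (mop a y) z) (mop (mop b y) z));
      [apply Erefl; exact Pyz | | exact Ha | exact Hb].
    apply Eop; [apply Eop; [exact Hab | apply Erefl; exact Py] | apply Erefl; exact Pz].
  - assert (Hyz : E (mop (mop a y) z) (mop (mop b y) z)).
    { rewrite <- Ha, <- Hb. apply Eop; [exact Hab | apply Erefl; exact Pyz]. }
    assert (Hy : E (mop a y) (mop b y))
      by exact (Ediv z z _ _ _ _ (Erefl z Pz) Hyz eq_refl eq_refl).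
    exact (Ediv y y _ _ _ _ (Erefl y Py) Hy eq_refl eq_refl).
Qed.

(* The data extracted from "S x S centralizes zeta" (conditions (ii), (iii)
   and the congruence property of (S x S | zeta)). *)
Definition center_witness {Q : magma} (ze : Q -> Q -> Prop)
    (D : prodM Q Q -> prodM Q Q -> Prop) : Prop :=
  congruence_on (prodM Q Q) (fun p => ze (fst p) (snd p)) D /\
  (forall x y p q, D (x, y) p -> D (x, y) q -> fst p = fst q -> p = q) /\
  (forall x y u, ze x y -> exists v, D (x, y) (u, v)) /\
  (forall x y, D (x, x) (y, y)).

Lemma center_witness_exists {Q : magma} {ze : Q -> Q -> Prop} :
  is_center_congruence Q ze -> exists D, center_witness ze D.
Proof.
  intros (_ & (D & Dc & _ & Dfib & Ddiag & _) & _).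
  exists D. split; [exact Dc |]. split; [| split].
  - intros x y p q Hp Hq Hpq.
    destruct (proj1 Dc _ _ Hp) as [Hxy _].
    exact (proj1 (Dfib x y Hxy) p q Hp Hq Hpq).
  - intros x y u Hxy. exact (proj2 (Dfib x y Hxy) u I).
  - intros x y. exact (Ddiag x y I).
Qed.

Definition admissible {Q : magma} (ze : Q -> Q -> Prop)
    (D : prodM Q Q -> prodM Q Q -> Prop) (phi : Q -> Q) : Prop :=
  phi munit = munit /\
  (forall p q, D p q -> D (phi (fst p), phi (snd p)) (phi (fst q), phi (snd q))) /\
  (forall a, ze munit a -> phi a = a) /\
  (forall x, ze x (phi x)).

Section CenterWitness.
Context {Q : magma} {ze : Q -> Q -> Prop} {D : prodM Q Q -> prodM Q Q -> Prop}.
Context (unit_l : forall x : Q, mop munit x = x) (unit_r : forall x : Q, mop x munit = x).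
Context (HD : center_witness ze D).

Lemma D_related {p q} : D p q -> ze (fst p) (snd p).
Proof. intro Hpq. exact (proj1 (proj1 (proj1 HD) _ _ Hpq)). Qed.

Lemma D_refl {a b} : ze a b -> D (a, b) (a, b).
Proof. destruct HD as ((_ & Drefl & _) & _). exact (Drefl (_, _)). Qed.

Lemma D_sym {p q} : D p q -> D q p.
Proof. destruct HD as ((_ & _ & Dsym & _) & _). exact (Dsym _ _). Qed.

Lemma D_op {p p' q q'} : D p p' -> D q q' -> D (mop p q) (mop p' q').
Proof. destruct HD as ((_ & _ & _ & _ & _ & Dop & _) & _). exact (Dop _ _ _ _). Qed.

Lemma D_inj {x y p q} : D (x, y) p -> D (x, y) q -> fst p = fst q -> p = q.
Proof. exact (proj1 (proj2 HD) x y p q). Qed.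

Lemma D_total {x y} u : ze x y -> exists v, D (x, y) (u, v).
Proof. exact (proj1 (proj2 (proj2 HD)) x y u). Qed.

Lemma D_diag x y : D (x, x) (y, y).
Proof. exact (proj2 (proj2 (proj2 HD)) x y). Qed.

(* For a central a, the D-class of (1, a) contains every pair (x, x a);
   by D_inj it consists exactly of these pairs. *)
Lemma central_pair {a} x : ze munit a -> D (munit, a) (x, mop x a).
Proof.
  intro Ha. pose proof (D_op (D_diag munit x) (D_refl Ha)) as E.
  rewrite !prodM_mop, !unit_l, unit_r in E. exact E.
Qed.

Lemma central_comm {a} y : ze munit a -> mop a y = mop y a.
Proof.
  intro Ha. pose proof (D_op (D_refl Ha) (D_diag munit y)) as E.
  rewrite !prodM_mop, !unit_l, !unit_r in E.
  pose proof (D_inj E (central_pair y Ha) eq_refl) as Eq.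
  injection Eq; auto.
Qed.

Lemma central_assoc {a} y z : ze munit a -> mop (mop a y) z = mop a (mop y z).
Proof.
  intro Ha. pose proof (central_pair y Ha) as E1.
  rewrite <- (central_comm y Ha) in E1.
  pose proof (D_op E1 (D_diag munit z)) as E2.
  rewrite !prodM_mop, !unit_r in E2.
  pose proof (central_pair (mop y z) Ha) as E3.
  rewrite <- (central_comm (mop y z) Ha) in E3.
  pose proof (D_inj E2 E3 eq_refl) as Eq. injection Eq; auto.
Qed.

Lemma central_right_comm {a c} x : ze munit a -> ze munit c ->
  mop (mop x c) a = mop (mop x a) c.
Proof.
  intros Ha Hc.
  pose proof (D_op (central_pair x Hc) (D_refl Ha)) as E1.
  pose proof (D_op (central_pair x Ha) (D_refl Hc)) as E2.
  rewrite !prodM_mop, !unit_r, (central_comm a Hc) in E1.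
  rewrite !prodM_mop, !unit_r in E2.
  pose proof (D_inj E1 E2 eq_refl) as Eq. injection Eq; auto.
Qed.

Lemma zeta_central_translate {x y} : ze x y -> exists c, ze munit c /\ y = mop x c.
Proof.
  intro Hxy. destruct (D_total munit Hxy) as [v Hv].
  pose proof (D_sym Hv) as Hs.
  pose proof (D_related Hs) as Hc; simpl in Hc.
  pose proof (D_inj Hs (central_pair x Hc) eq_refl) as Eq.
  injection Eq; eauto.
Qed.

Lemma admissible_translate {phi a} x : admissible ze D phi -> ze munit a ->
  phi (mop x a) = mop (phi x) a.
Proof.
  intros (Hunit & Hpres & Hcen & _) Ha.
  pose proof (Hpres _ _ (central_pair x Ha)) as E. simpl in E.
  rewrite Hunit, (Hcen a Ha) in E.
  pose proof (D_inj E (central_pair (phi x) Ha) eq_refl) as Eq.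
  injection Eq; auto.
Qed.

(* Writing phi x = x d and psi x = x c with d, c central, both composites
   send x to x c d = x d c. *)
Lemma admissible_commute {phi psi} x : admissible ze D phi -> admissible ze D psi ->
  phi (psi x) = psi (phi x).
Proof.
  intros Hphi Hpsi.
  destruct (zeta_central_translate (proj2 (proj2 (proj2 Hpsi)) x)) as [c [Hc Ec]].
  destruct (zeta_central_translate (proj2 (proj2 (proj2 Hphi)) x)) as [d [Hd Ed]].
  rewrite Ec, Ed, (admissible_translate x Hphi Hc), (admissible_translate x Hpsi Hd).
  rewrite Ec, Ed. symmetry. apply central_right_comm; assumption.
Qed.

End CenterWitness.

Section Quotient.
Context {M : magma} {C : M -> M -> Prop} (HC : congruence M C).

Lemma cong_refl x : C x x.
Proof. destruct HC as (_ & Crefl & _). exact (Crefl x I). Qed.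

Lemma cong_sym {x y} : C x y -> C y x.
Proof. destruct HC as (_ & _ & Csym & _). exact (Csym _ _). Qed.

Lemma cong_trans {x y z} : C x y -> C y z -> C x z.
Proof. destruct HC as (_ & _ & _ & Ctrans & _). exact (Ctrans _ _ _). Qed.

Lemma cong_op {a a' b b'} : C a a' -> C b b' -> C (mop a b) (mop a' b').
Proof. destruct HC as (_ & _ & _ & _ & _ & Cop & _). exact (Cop _ _ _ _). Qed.

Lemma cong_div {a a' b b' X X'} :
  C a a' -> C b b' -> mop X a = b -> mop X' a' = b' -> C X X'.
Proof. destruct HC as (_ & _ & _ & _ & _ & _ & Cdiv). exact (Cdiv _ _ _ _ _ _). Qed.

Lemma qcls_eq_iff x y : qcls M C x = qcls M C y <-> C x y.
Proof.
  split.
  - intro E. apply (f_equal (@proj1_sig _ _)) in E. simpl in E.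
    pose proof (cong_refl y) as Hy. rewrite <- E in Hy. exact Hy.
  - intro Hxy. unfold qcls.
    assert (Eclass : C x = C y).
    { extensionality z. apply propositional_extensionality. split; intro Hz.
      - exact (cong_trans (cong_sym Hxy) Hz).
      - exact (cong_trans Hxy Hz). }
    generalize (ex_intro (fun z => C y = C z) y eq_refl).
    generalize (ex_intro (fun z => C x = C z) x eq_refl).
    rewrite Eclass. intros. f_equal. apply proof_irrelevance.
Qed.

Lemma qcls_qrep (p : qcarrier M C) : qcls M C (qrep p) = p.
Proof.
  destruct p as [P h]. unfold qrep. simpl.
  destruct (constructive_indefinite_description _ h) as [r Hr]. simpl.
  unfold qcls. subst P. f_equal. apply proof_irrelevance.
Qed.

Lemma qcls_surj (p : qcarrier M C) : exists x, p = qcls M C x.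
Proof. exists (qrep p). symmetry. apply qcls_qrep. Qed.

Lemma qrep_qcls x : C (qrep (qcls M C x)) x.
Proof. apply qcls_eq_iff. apply qcls_qrep. Qed.

Lemma qcls_mop x y : @mop (quotM M C) (qcls M C x) (qcls M C y) = qcls M C (mop x y).
Proof. apply qcls_eq_iff. apply cong_op; apply qrep_qcls. Qed.

Lemma quot_unit : @munit (quotM M C) = qcls M C munit.
Proof. reflexivity. Qed.

Lemma quot_unit_laws : is_right_loop M ->
  (forall p : quotM M C, mop munit p = p) /\ (forall p : quotM M C, mop p munit = p).
Proof.
  intros [Hid _]. split; intro p; destruct (qcls_surj p) as [x ->];
    rewrite quot_unit, qcls_mop; f_equal; apply Hid.
Qed.

End Quotient.

Definition compatible {M : magma} {C : M -> M -> Prop}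
    (ze : quotM M C -> quotM M C -> Prop)
    (D : prodM (quotM M C) (quotM M C) -> prodM (quotM M C) (quotM M C) -> Prop)
    (g : M -> M) : Prop :=
  (forall x y, C x y <-> C (g x) (g y)) /\
  C (g munit) munit /\
  (forall a, ze (qcls M C munit) (qcls M C a) -> C (g a) a) /\
  (forall x x' u u', D (qcls M C x, qcls M C x') (qcls M C u, qcls M C u') <->
     D (qcls M C (g x), qcls M C (g x')) (qcls M C (g u), qcls M C (g u'))).

Definition induced {M : magma} (C : M -> M -> Prop) (g : M -> M)
    (p : quotM M C) : quotM M C :=
  qcls M C (g (qrep p)).

Section Compatible.
Context {M : magma} {C : M -> M -> Prop} {ze : quotM M C -> quotM M C -> Prop}
  {D : prodM (quotM M C) (quotM M C) -> prodM (quotM M C) (quotM M C) -> Prop}.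
Context (HC : congruence M C).

Lemma compatible_gen (A : (M -> M) -> Prop) :
  (forall f, A f -> compatible ze D f) ->
  forall g, gen_perm A g -> compatible ze D g.
Proof.
  intros HA g Hg. induction Hg as [f Hf | | f g _ (Cf & Uf & Zf & Df) _ (Cg & Ug & Zg & Dg)
                                  | f g _ (Cf & Uf & Zf & Df) _ Efg].
  - exact (HA f Hf).
  - repeat split; intros; try assumption; apply (cong_refl HC).
  - split; [| split; [| split]].
    + intros x y. rewrite Cg. apply Cf.
    + apply (cong_trans HC (y := f munit)); [apply (proj1 (Cf _ _)), Ug | exact Uf].
    + intros a Ha. apply (cong_trans HC (y := f a)); [apply (proj1 (Cf _ _)), Zg, Ha | apply Zf, Ha].
    + intros x x' u u'. rewrite Dg. apply Df.
  - split; [| split; [| split]].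
    + intros x y. rewrite (Cf (g x) (g y)), !Efg. reflexivity.
    + apply (proj2 (Cf _ _)). rewrite Efg. apply (cong_sym HC). exact Uf.
    + intros a Ha. apply (proj2 (Cf _ _)). rewrite Efg. apply (cong_sym HC), Zf, Ha.
    + intros x x' u u'. rewrite (Df (g x) (g x') (g u) (g u')), !Efg. reflexivity.
Qed.

Lemma induced_qcls {g} : compatible ze D g ->
  forall x, induced C g (qcls M C x) = qcls M C (g x).
Proof.
  intros (Cg & _) x. unfold induced. apply (qcls_eq_iff HC).
  apply (proj1 (Cg _ _)), (qrep_qcls HC).
Qed.

Lemma induced_admissible {g} : compatible ze D g ->
  (forall x, ze (qcls M C x) (qcls M C (g x))) -> admissible ze D (induced C g).
Proof.
  intros Hg Kg. pose proof Hg as (_ & Ug & Zg & Dg).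
  split; [| split; [| split]].
  - rewrite quot_unit, (induced_qcls Hg). apply (qcls_eq_iff HC). exact Ug.
  - intros [p1 p2] [q1 q2] Hpq. simpl.
    destruct (qcls_surj p1) as [x1 ->]. destruct (qcls_surj p2) as [x2 ->].
    destruct (qcls_surj q1) as [y1 ->]. destruct (qcls_surj q2) as [y2 ->].
    rewrite !(induced_qcls Hg). apply (proj1 (Dg _ _ _ _)), Hpq.
  - intros a Ha. destruct (qcls_surj a) as [a0 ->].
    rewrite (induced_qcls Hg). apply (qcls_eq_iff HC), Zg, Ha.
  - intro p. destruct (qcls_surj p) as [x ->].
    rewrite (induced_qcls Hg). apply Kg.
Qed.

Context (RL : is_right_loop M) (HD : center_witness ze D).

Lemma torsion_map_unit {y z f} : is_torsion_map M y z f -> f munit = munit.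
Proof.
  intro Ht. destruct RL as [Hid Hdiv].
  destruct (Hdiv (mop y z) (mop y z)) as [X [_ Huniq]].
  rewrite <- (Huniq (f munit)), <- (Huniq munit); [reflexivity | apply Hid |].
  rewrite Ht. f_equal. apply Hid.
Qed.

Lemma torsion_map_compatible {y z f} : is_torsion_map M y z f -> compatible ze D f.
Proof.
  intro Ht. unfold is_torsion_map in Ht.
  destruct (quot_unit_laws HC RL) as [Qunit_l Qunit_r].
  assert (Hze : forall p, ze p p).
  { intro p. exact (D_related HD (D_diag HD p p)). }
  split; [| split; [| split]].
  - intros x x'. apply (congruence_on_torsion_transfer (y := y) (z := z) HC);
      auto; symmetry; apply Ht.
  - rewrite (torsion_map_unit Ht). apply (cong_refl HC).
  - intros a Ha.
    pose proof (central_assoc Qunit_l Qunit_r HD (qcls M C y) (qcls M C z) Ha) as E.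
    rewrite !(qcls_mop HC), <- Ht in E. apply (qcls_eq_iff HC) in E.
    exact (cong_div HC (cong_refl HC (mop y z)) E eq_refl eq_refl).
  - intros x x' u u'.
    apply (congruence_on_torsion_transfer (proj1 HD)
             (y := (qcls M C y, qcls M C y) : prodM (quotM M C) (quotM M C))
             (z := (qcls M C z, qcls M C z) : prodM (quotM M C) (quotM M C)));
      try apply Hze; rewrite !prodM_mop, !(qcls_mop HC), !Ht; reflexivity.
Qed.

Lemma commutator_within {g h g' h'} :
  compatible ze D g -> compatible ze D h -> compatible ze D g' -> compatible ze D h' ->
  (forall x, ze (qcls M C x) (qcls M C (g x))) ->
  (forall x, ze (qcls M C x) (qcls M C (h x))) ->
  (forall x, g' (g x) = x) -> (forall x, h' (h x) = x) ->
  forall x, C x (g' (h' (g (h x)))).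
Proof.
  intros Hg Hh [Cg' _] [Ch' _] Kg Kh Eg Eh x.
  destruct (quot_unit_laws HC RL) as [Qunit_l Qunit_r].
  pose proof (admissible_commute Qunit_l Qunit_r HD (qcls M C x)
               (induced_admissible Hg Kg) (induced_admissible Hh Kh)) as E.
  rewrite !(induced_qcls Hh), !(induced_qcls Hg), (induced_qcls Hh) in E.
  apply (qcls_eq_iff HC), (proj1 (Ch' _ _)) in E. rewrite Eh in E.
  apply (proj1 (Cg' _ _)) in E. rewrite Eg in E.
  apply (cong_sym HC). exact E.
Qed.

End Compatible.

(* In a right loop, (a relation equivalent to) equality is a congruence;
   right division is well defined by uniqueness of solutions. *)
Lemma equality_congruence {M : magma} {R : M -> M -> Prop} :
  is_right_loop M -> (forall x y, R x y <-> x = y) -> congruence M R.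
Proof.
  intros [_ Hdiv] HR.
  split; [| split; [| split; [| split; [| split; [| split]]]]].
  - intros; split; exact I.
  - intros x _. apply HR. reflexivity.
  - intros x y Hxy. apply HR. symmetry. apply HR, Hxy.
  - intros x y z Hxy Hyz. apply HR. transitivity y; apply HR; assumption.
  - apply HR. reflexivity.
  - intros a a' b b' Ha Hb. apply HR. apply HR in Ha, Hb. subst. reflexivity.
  - intros a a' b b' X X' Ha Hb EX EX'. apply HR. apply HR in Ha, Hb. subst a' b'.
    destruct (Hdiv a b) as [X0 [_ Huniq]].
    rewrite <- (Huniq X EX). apply Huniq. exact EX'.
Qed.

Lemma preimage_congruence {M : magma} {C C' : M -> M -> Prop}
    {ze : quotM M C -> quotM M C -> Prop} :
  congruence M C -> congruence (quotM M C) ze ->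
  (forall x y, C' x y <-> ze (qcls M C x) (qcls M C y)) -> congruence M C'.
Proof.
  intros HC Hze HC'.
  split; [| split; [| split; [| split; [| split; [| split]]]]].
  - intros; split; exact I.
  - intros x _. apply HC', (cong_refl Hze).
  - intros x y Hxy. apply HC', (cong_sym Hze), HC', Hxy.
  - intros x y z Hxy Hyz. apply HC'.
    apply (cong_trans Hze (y := qcls M C y)); apply HC'; assumption.
  - apply HC', (cong_refl Hze).
  - intros a a' b b' Ha Hb. apply HC'. rewrite <- !(qcls_mop HC).
    apply (cong_op Hze); apply HC'; assumption.
  - intros a a' b b' X X' Ha Hb EX EX'. apply HC'.
    apply (cong_div Hze (a := qcls M C a) (a' := qcls M C a')
                        (b := qcls M C b) (b' := qcls M C b')).
    + apply HC', Ha.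
    + apply HC', Hb.
    + rewrite (qcls_mop HC), EX. reflexivity.
    + rewrite (qcls_mop HC), EX'. reflexivity.
Qed.

Section Torsion.
Context {L : magma} (RL : is_right_loop L).

Lemma commutator_subgroup_layer {C C' : L -> L -> Prop}
    {ze : quotM L C -> quotM L C -> Prop} {H : (L -> L) -> Prop} :
  congruence L C -> is_center_congruence (quotM L C) ze ->
  (forall x y, C' x y <-> ze (qcls L C x) (qcls L C y)) ->
  (forall g, H g -> group_torsion L g /\ forall x, C' x (g x)) ->
  forall g, commutator_subgroup H g -> group_torsion L g /\ forall x, C x (g x).
Proof.
  intros HC Hcen HC' HH g Hg.
  destruct (center_witness_exists Hcen) as [D HD].
  assert (Hcompat : forall f, group_torsion L f -> compatible ze D f).
  { apply compatible_gen; [exact HC |].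
    intros f (y & z & Ht). exact (torsion_map_compatible HC RL HD Ht). }
  induction Hg as [c Hc | | f1 f2 _ [G1 K1] _ [G2 K2] | f1 f2 _ [G1 K1] E21 E12].
  - destruct Hc as (g & h & g' & h' & Hg & Hh & Eg & Eg' & Eh & Eh' & ->).
    destruct (HH g Hg) as [Gg Kg]. destruct (HH h Hh) as [Gh Kh].
    pose proof (gen_inv g' Gg Eg Eg') as Gg'.
    pose proof (gen_inv h' Gh Eh Eh') as Gh'.
    split.
    + exact (gen_comp Gg' (gen_comp Gh' (gen_comp Gg Gh))).
    + apply (commutator_within HC RL HD); try apply Hcompat; try assumption;
        intro x; apply HC'; auto.
  - split; [apply gen_id | intro x; apply (cong_refl HC)].
  - split; [apply gen_comp; assumption |].
    intro x. apply (cong_trans HC (y := f2 x)); auto.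
  - split; [exact (gen_inv f2 G1 E21 E12) |].
    intro x. apply (cong_sym HC). rewrite <- (E12 x) at 2. apply K1.
Qed.

Section NilpotentSeries.
Context {n : nat} {alpha : nat -> L -> L -> Prop}
  {zeta : forall i, quotM L (alpha i) -> quotM L (alpha i) -> Prop}.
Context (alpha_0 : forall x y, alpha 0 x y <-> x = y).
Context (alpha_S : forall i, i < n ->
  is_center_congruence (quotM L (alpha i)) (zeta i) /\
  (forall x y, alpha (S i) x y <-> zeta i (qcls L (alpha i) x) (qcls L (alpha i) y))).
Context (alpha_n : forall x y, alpha n x y).

Lemma series_congruence i : i <= n -> congruence L (alpha i).
Proof.
  induction i as [| i IH]; intro Hi.
  - exact (equality_congruence RL alpha_0).
  - destruct (alpha_S i Hi) as [[Hze _] HS].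
    exact (preimage_congruence (IH (Nat.lt_le_incl _ _ Hi)) Hze HS).
Qed.

Lemma derived_within k : k <= n ->
  forall g, derived (group_torsion L) k g ->
  group_torsion L g /\ forall x, alpha (n - k) x (g x).
Proof.
  induction k as [| k IH]; intros Hk g Hg.
  - split; [exact Hg | intro x; rewrite Nat.sub_0_r; apply alpha_n].
  - assert (Hi : n - S k < n) by lia.
    destruct (alpha_S _ Hi) as [Hcen HS].
    replace (S (n - S k)) with (n - k) in HS by lia.
    exact (commutator_subgroup_layer (series_congruence _ (Nat.lt_le_incl _ _ Hi))
             Hcen HS (IH ltac:(lia)) g Hg).
Qed.

End NilpotentSeries.
End Torsion.

Theorem mainTheorem15 (S : magma) :
  is_right_loop S -> nilpotent S -> solvable_perm_group (group_torsion S).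
Proof.
  intros RL (n & alpha & zeta & alpha_0 & alpha_S & alpha_n).
  exists n. intros g Hg x.
  destruct (derived_within RL alpha_0 alpha_S alpha_n n (le_n n) g Hg) as [_ Hmove].
  rewrite Nat.sub_diag in Hmove.
  symmetry. apply alpha_0, Hmove.
Qed.
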